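(* Let $G$ be a topological gyrogroup. Then $G^{\bullet}$ is $\sigma$-compact if and only if $G$ is $\sigma$-compact.
   Context: A gyrogroup is a set $G$ with a binary operation $\oplus$ such that: (G1) there is a unique identity $0$ with $0\oplus a=a=a\oplus 0$; (G2) each $x$ has a unique inverse $\ominus x$ with $\ominus x\oplus x=0=x\oplus(\ominus x)$; (G3) for all $x,y$ there is an automorphism $\mathrm{gyr}[x,y]$ of $(G,\oplus)$ with $x\oplus(y\oplus z)=(x\oplus y)\oplus \mathrm{gyr}[x,y](z)$ for all $z$; (G4) $\mathrm{gyr}[x\oplus y,y]=\mathrm{gyr}[x,y]$. A topological gyrogroup is a gyrogroup with a topology (all spaces are assumed $T_1$) such that $\oplus$ is jointly continuous and $x\mapsto\ominus x$ is continuous. A space is $\sigma$-compact if it is a countable union of compact subsets. Construction: let $J=[0,1)$ and let $G^{\bullet}$ be the set of all functions $f:J\to G$ for which there exist $0=a_0<a_1<\dots<a_n=1$ with $f$ constant on each $[a_k,a_{k+1})$, with pointwise operation $(f\oplus^{\bullet}g)(r)=f(r)\oplus g(r)$. For an open neighbourhood $V$ of $0$ in $G$ and $\varepsilon>0$ let $O(V,\varepsilon)=\{f\in G^{\bullet}:\mu(\{r\in J: f(r)\notin V\})<\varepsilon\}$, $\mu$ Lebesgue measure. $G^{\bullet}$ carries the topological gyrogroup topology in which the sets $f\oplus^{\bullet}O(V,\varepsilon)$ form a local base at each $f\in G^{\bullet}$. *)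

From HB Require Import structures.
From mathcomp Require Import all_boot all_order all_algebra.
From mathcomp Require Import all_classical all_reals all_analysis.

Set Implicit Arguments.
Unset Strict Implicit.
Unset Printing Implicit Defensive.

Import Order.TTheory GRing.Theory Num.Theory.
Local Open Scope classical_set_scope.
Local Open Scope ring_scope.

Definition groupoid_automorphism (T : Type) (op : T -> T -> T) (g : T -> T) :=
  bijective g /\ forall a b, g (op a b) = op (g a) (g b).

Definition is_gyrogroup (T : Type) (op : T -> T -> T) (e : T) (inv : T -> T) :=
  [/\
      (forall a, op e a = a /\ op a e = a),
      (forall e', (forall a, op e' a = a /\ op a e' = a) -> e' = e),
      (forall x, op (inv x) x = e /\ op x (inv x) = e),
      (forall x y, op y x = e /\ op x y = e -> y = inv x) &
      exists gyr : T -> T -> T -> T,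
        [/\ forall x y, groupoid_automorphism op (gyr x y),
            forall x y z, op x (op y z) = op (op x y) (gyr x y z) &
            forall x y, gyr (op x y) y = gyr x y]].

(** A topological gyrogroup (the standing convention: spaces are T_1). *)
Definition is_topological_gyrogroup (T : topologicalType)
    (op : T -> T -> T) (e : T) (inv : T -> T) :=
  [/\ is_gyrogroup op e inv,
      continuous (fun p : T * T => op p.1 p.2),
      continuous inv &
      accessible_space T].

Definition sigma_compact (T : topologicalType) :=
  exists K : nat -> set T, (forall n, compact (K n)) /\ \bigcup_n K n = setT.

Definition J (R : realType) := {r : R | 0 <= r < 1}.

Definition is_step (R : realType) (T : Type) (f : J R -> T) :=
  exists (n : nat) (a : nat -> R),
    [/\ a 0%N = 0, a n = 1,
        (forall k, (k < n)%N -> a k < a k.+1) &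
        (forall k, (k < n)%N -> forall r r' : J R,
            a k <= sval r < a k.+1 -> a k <= sval r' < a k.+1 -> f r = f r')].

(** The carrier of G^bullet (it depends on op and e only through its
    topology, defined below). *)
Definition gbullet (R : realType) (T : topologicalType)
  (op : T -> T -> T) (e : T) : Type := {f : J R -> T | is_step f}.

Section GBullet.
Variables (R : realType) (T : topologicalType) (op : T -> T -> T) (e : T).
Local Notation Gb := (gbullet R op e).

Definition gb_op_fun (f g : Gb) : J R -> T := fun r => op (sval f r) (sval g r).

Definition gb_O (V : set T) (eps : R) : set Gb :=
  [set g : Gb | (lebesgue_measure (sval @` [set r : J R | ~ V (sval g r)])
                   < eps%:E)%E].

Definition gb_basic (f : Gb) (V : set T) (eps : R) : set Gb :=
  [set h : Gb | exists2 g, gb_O V eps g & sval h = gb_op_fun f g].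

Definition gb_open : set_system Gb :=
  [set U | forall f, U f -> exists V : set T, exists eps : R,
      [/\ open V, V e, 0 < eps & gb_basic f V eps `<=` U]].

Lemma gb_O_mono (V V' : set T) (eps eps' : R) :
  V `<=` V' -> eps <= eps' -> gb_O V eps `<=` gb_O V' eps'.
Proof.
move=> VV' ee' g; rewrite /gb_O /= => Og.
apply: (le_lt_trans _ (lt_le_trans Og _)); last by rewrite lee_fin.
rewrite /lebesgue_measure /lebesgue_stieltjes_measure /measure_extension /=.
apply: le_outer_measure => _ [r /= nV <-]; exists r => //= /VV' ?; exact: nV.
Qed.

Local Lemma gb_openT : gb_open setT.
Proof.
move=> f _; exists setT, 1; split => //; first exact: openT.
Qed.

Local Lemma gb_openI : setI_closed gb_open.
Proof.
move=> A B oA oB f [Af Bf].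
have [V1 [e1 [oV1 V1e e1p sA]]] := oA f Af.
have [V2 [e2 [oV2 V2e e2p sB]]] := oB f Bf.
exists (V1 `&` V2), (Num.min e1 e2); split => //.
- exact: openI.
- by rewrite lt_min e1p e2p.
- move=> h [g Og hg]; split.
  + apply: sA; exists g => //; apply: gb_O_mono Og; [by move=> x [] | ].
    by rewrite ge_min lexx.
  + apply: sB; exists g => //; apply: gb_O_mono Og; [by move=> x [] | ].
    by rewrite ge_min lexx orbT.
Qed.

Local Lemma gb_open_bigU (I : Type) (F : I -> set Gb) :
  (forall i, gb_open (F i)) -> gb_open (\bigcup_i F i).
Proof.
move=> oF f [i _ Fif].
have [V [eps [oV Ve epsp sF]]] := oF i f Fif.
exists V, eps; split => // h bh; exists i => //; exact: sF.
Qed.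

HB.instance Definition _ := gen_eqMixin Gb.
HB.instance Definition _ := gen_choiceMixin Gb.
HB.instance Definition _ := isOpenTopological.Build Gb gb_openT gb_openI gb_open_bigU.

End GBullet.

From HB Require Import structures.
From mathcomp Require Import all_boot all_order all_algebra.
From mathcomp Require Import all_classical all_reals all_analysis.

(** Constant functions embed G into G^bullet, and no non-constant step
    function is a limit of constants: if f takes values a <> b on sets of
    positive measure, a small basic neighbourhood of f containing the constant
    x would give x = a (+) u = b (+) v with u, v near 0, contradicting the
    continuity of (u, v) |-> (-)(b (+) v) (+) (a (+) u) at (0, 0), where it
    takes the value (-)b (+) a <> 0.  So the constants form a closed copy of G
    and sigma-compactness passes from G^bullet to G.

    Conversely, a step function with n + 1 pieces is the value at a point of
    G x (R x G)^n of a map that overwrites the function from a breakpoint t on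
    by a new value.  This map is continuous, because moving a breakpoint from
    t to t' changes the function only on a set of measure |t - t'|.  Hence
    G^bullet is the union, over finite sequences of indices, of the continuous
    images of the compact sets K_i0 x ([0,1] x K_i1) x ... built from a
    compact cover (K_i) of G. *)

Set Implicit Arguments.
Unset Strict Implicit.
Unset Printing Implicit Defensive.

Import Order.TTheory GRing.Theory Num.Theory numFieldNormedType.Exports.
Local Open Scope classical_set_scope.
Local Open Scope ring_scope.

Section Gyrogroup.
Variables (T : Type) (op : T -> T -> T) (e : T) (inv : T -> T).
Hypothesis gyroT : is_gyrogroup op e inv.

Lemma gyro_add0r a : op e a = a. Proof. by case: gyroT => H _ _ _ _; case: (H a). Qed.
Lemma gyro_addr0 a : op a e = a. Proof. by case: gyroT => H _ _ _ _; case: (H a). Qed.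
Lemma gyro_addNr a : op (inv a) a = e. Proof. by case: gyroT => _ _ H _ _; case: (H a). Qed.
Lemma gyro_addrN a : op a (inv a) = e. Proof. by case: gyroT => _ _ H _ _; case: (H a). Qed.

Lemma gyro_oppK a : inv (inv a) = a.
Proof. by case: gyroT => _ _ _ H _; apply/esym/H; rewrite gyro_addrN gyro_addNr. Qed.

(* The left cancellation law: (-)a (+) (a (+) b) = gyr[(-)a, a] b by (G3),
   and gyr[(-)a, a] = gyr[0, a] = id by (G4). *)
Lemma gyro_addKr a b : op (inv a) (op a b) = b.
Proof.
case: gyroT => _ _ _ _ [gyr [gyr_aut gyr_assoc gyr_loop]].
have gyr_inj x y : injective (gyr x y).
  by case: (gyr_aut x y) => [[g gK _] _]; exact: can_inj gK.
have addrI : injective (op a).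
  move=> x y /(congr1 (op (inv a))).
  by rewrite !gyr_assoc gyro_addNr !gyro_add0r => /gyr_inj.
have gyr0 z : gyr e a z = z.
  by apply: addrI; have := gyr_assoc e a z; rewrite !gyro_add0r.
by rewrite gyr_assoc gyro_addNr gyro_add0r -gyr_loop gyro_addNr gyr0.
Qed.

Lemma gyro_addNKr a b : op a (op (inv a) b) = b.
Proof. by rewrite -{1}(gyro_oppK a) gyro_addKr. Qed.

Lemma gyro_subr_neq0 a b : a <> b -> op (inv b) a <> e.
Proof. by move=> + ab0; apply; rewrite -(gyro_addNKr b a) ab0 gyro_addr0. Qed.

End Gyrogroup.

Section MeasureOnJ.
Variable R : realType.

Definition J0 : J R := exist _ 0 (introT andP (conj (lexx 0) ltr01)).

Definition muJ (P : J R -> Prop) : \bar R :=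
  lebesgue_measure (sval @` [set r : J R | P r]).

Lemma muJ_leU (P Q1 Q2 : J R -> Prop) : (forall r, P r -> Q1 r \/ Q2 r) ->
  (muJ P <= muJ Q1 + muJ Q2)%E.
Proof.
move=> PQ; rewrite /muJ /lebesgue_measure /lebesgue_stieltjes_measure /=.
rewrite /measure_extension /=; apply: le_trans (outer_measureU2 _ _ _).
apply: le_outer_measure => _ [r /= Pr <-].
by case: (PQ r Pr) => H; [left|right]; exists r.
Qed.

Lemma muJ_itv_le (P : J R -> Prop) (a b : R) : a <= b ->
  (forall r, P r -> a <= sval r < b) -> (muJ P <= (b - a)%:E)%E.
Proof.
move=> ab Pab.
have -> : (b - a)%:E = lebesgue_measure (`[a, b[%classic : set R).
  by rewrite lebesgue_measure_itv /= lte_fin; case: ltgtP ab => // ->; rewrite subrr.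
rewrite /muJ /lebesgue_measure /lebesgue_stieltjes_measure /measure_extension /=.
by apply: le_outer_measure => _ [r /= Pr <-]; rewrite /= in_itv /=; apply: Pab.
Qed.

Lemma muJ_ge_itv (P : J R -> Prop) (c d : R) : 0 <= c -> c <= d -> d <= 1 ->
  (forall r, c <= sval r < d -> P r) -> ((d - c)%:E <= muJ P)%E.
Proof.
move=> c0 cd d1 HP.
have -> : (d - c)%:E = lebesgue_measure (`[c, d[%classic : set R).
  by rewrite lebesgue_measure_itv /= lte_fin; case: ltgtP cd => // ->; rewrite subrr.
rewrite /muJ /lebesgue_measure /lebesgue_stieltjes_measure /measure_extension /=.
apply: le_outer_measure => x /=; rewrite in_itv /= => /andP[cx xd].
have x01 : 0 <= x < 1 by rewrite (le_trans c0 cx) (lt_le_trans xd d1).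
by exists (exist _ x x01) => //; apply: HP; rewrite /= cx xd.
Qed.

Lemma muJ_eq0 (P : J R -> Prop) : (forall r, ~ P r) -> muJ P = 0%E.
Proof.
move=> nP; rewrite /muJ (_ : _ @` _ = set0) ?measure0 //.
by apply/seteqP; split => // x [r Pr _]; case: (nP r).
Qed.

Lemma muJ_lt1 (P : J R -> Prop) : (muJ P < 1%:E)%E -> exists r, ~ P r.
Proof.
move=> P1; apply/not_existsP => nP.
have : (1%:E <= muJ P)%E.
  by rewrite -[1]subr0; apply: muJ_ge_itv => // r _; exact: contra_notP (nP r).
by rewrite leNgt P1.
Qed.

Lemma lt_neq_itv (a b c : R) : a <= b -> (c < a) != (c < b) -> a <= c < b.
Proof.
move=> ab; case: (ltP c a) => ca; case: (ltP c b) => cb //=.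
by move: (lt_le_trans ca ab); rewrite ltNge cb.
Qed.

Lemma muJ_le_dist (t t' : R) (P : J R -> Prop) :
  (forall r, P r -> (sval r < t) != (sval r < t')) -> (muJ P <= `|t - t'|%:E)%E.
Proof.
move=> HP; have [tt'|t't] := leP t t'.
  have -> : `|t - t'| = t' - t by rewrite distrC ger0_norm // subr_ge0.
  by apply: muJ_itv_le => // r /HP; exact: lt_neq_itv.
have -> : `|t - t'| = t - t' by rewrite ger0_norm // subr_ge0 ltW.
apply: muJ_itv_le (ltW t't) _ => r /HP; rewrite eq_sym.
by apply: lt_neq_itv; exact: ltW.
Qed.

End MeasureOnJ.

Section StepFunctions.
Variable R : realType.

Lemma partition_locate (n : nat) (a : nat -> R) : a 0%N = 0 -> a n = 1 ->
  forall x, 0 <= x < 1 -> exists k, (k < n)%N /\ a k <= x < a k.+1.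
Proof.
move=> a0 an x /andP[x0 x1].
suff H m : (m <= n)%N -> x < a m -> exists k, (k < m)%N /\ a k <= x < a k.+1.
  by apply: H => //; rewrite an.
elim: m => [|m IH] mn xm; first by move: xm; rewrite a0 ltNge x0.
have [xam|amx] := ltP x (a m); last by exists m; rewrite amx xm.
by have [k [km hk]] := IH (ltnW mn) xam; exists k; split => //; apply: ltnW.
Qed.

(* An order-free form of [is_step]: cut sets of two functions merge by
   concatenation, so closure under pointwise operations is immediate. *)
Definition cut_step (T : Type) (f : J R -> T) := exists b : seq R,
  forall r r' : J R, (forall c, c \in b -> (c <= sval r) = (c <= sval r')) -> f r = f r'.

Lemma cut_step_of_step (T : Type) (f : J R -> T) : is_step f -> cut_step f.
Proof.
case=> n [a [a0 an ainc astep]].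
exists [seq a k | k <- iota 0 n.+1] => r r' H.
have [k [kn /andP[h1 h2]]] := partition_locate a0 an (svalP r).
have mem_a j : (j <= n)%N -> a j \in [seq a k | k <- iota 0 n.+1].
  by move=> jn; apply: map_f; rewrite mem_iota add0n ltnS jn.
apply: (astep k kn); first by rewrite h1 h2.
rewrite -H ?h1 /=; last exact: mem_a (ltnW kn).
by rewrite ltNge -H ?leNgt ?h2 //; exact: mem_a.
Qed.

(* The breakpoints are 0, the cut points inside (0, 1) in increasing order,
   and 1. *)
Lemma step_of_cut_step (T : Type) (f : J R -> T) : cut_step f -> is_step f.
Proof.
case=> b Hb.
set s := sort <=%O (undup [seq c <- b | (0 < c) && (c < 1)]).
have ss : sorted <%O s by rewrite sort_lt_sorted undup_uniq.
have mem_s c : c \in s -> (0 < c) && (c < 1).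
  by rewrite mem_sort mem_undup mem_filter => /andP[].
set L := 0 :: rcons s 1.
have sL : sorted <%O L.
  rewrite /L lt_sorted_pairwise /= -cats1 pairwise_cat /= andbT.
  apply/and3P; split.
  - by rewrite all_cat /= ltr01 !andbT; apply/allP => c /mem_s /andP[].
  - by rewrite allrel1r; apply/allP => c /mem_s /andP[].
  - by rewrite -lt_sorted_pairwise.
set a := fun k => nth 1 L k.
have sizeL : size L = (size s).+2 by rewrite /= size_rcons.
have a_lt i j : (i < j)%N -> (j < (size s).+2)%N -> a i < a j.
  move=> ij jl; rewrite /a (lt_sorted_ltn_nth 1 sL) ?inE ?sizeL //.
  exact: ltn_trans ij jl.
have a_le i j : (i <= j)%N -> (j < (size s).+2)%N -> a i <= a j.
  rewrite leq_eqVlt => /orP[/eqP -> //|ij jl]; exact/ltW/a_lt.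
exists (size s).+1, a; split => //.
- by rewrite /a /L /= nth_rcons ltnn eqxx.
- by move=> k kl; apply: a_lt.
move=> k kl r r' /andP[r1 r2] /andP[r1' r2']; apply: Hb => c cb.
have [r01 r'01] := (svalP r, svalP r').
have [c0|c0] := leP c 0.
  by rewrite (le_trans c0 (proj1 (andP r01))) (le_trans c0 (proj1 (andP r'01))).
have [c1|c1] := leP 1 c.
  by rewrite !leNgt (lt_le_trans (proj2 (andP r01)) c1) (lt_le_trans (proj2 (andP r'01)) c1).
have cs : c \in s by rewrite mem_sort mem_undup mem_filter c0 c1 cb.
have [j js ->] : exists2 j, (j < size s)%N & c = a j.+1.
  exists (index c s); first by rewrite index_mem.
  by rewrite /a /L /= nth_rcons index_mem cs nth_index.
have [jk|kj] := leqP j.+1 k.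
  have h := a_le _ _ jk (ltn_trans kl (ltnSn _)).
  by rewrite (le_trans h r1) (le_trans h r1').
have h : a k.+1 <= a j.+1 by apply: a_le => //; rewrite ltnS; exact: ltnW.
by rewrite !leNgt (lt_le_trans r2 h) (lt_le_trans r2' h).
Qed.

Lemma is_stepP (T : Type) (f : J R -> T) : is_step f <-> cut_step f.
Proof. by split; [exact: cut_step_of_step | exact: step_of_cut_step]. Qed.

Lemma cut_step_cst (T : Type) (x : T) : cut_step (fun _ : J R => x).
Proof. by exists [::]. Qed.

Lemma cut_step_map2 (T U V : Type) (h : T -> U -> V) (f : J R -> T) (g : J R -> U) :
  cut_step f -> cut_step g -> cut_step (fun r => h (f r) (g r)).
Proof.
case=> b Hb [b' Hb']; exists (b ++ b') => r r' H.
by rewrite (Hb r r') ?(Hb' r r') // => c cb; apply: H; rewrite mem_cat cb ?orbT.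
Qed.

Lemma cut_step_overwrite (T : Type) (f : J R -> T) (t : R) (x : T) :
  cut_step f -> cut_step (fun r => if sval r < t then f r else x).
Proof.
case=> b Hb; exists (t :: b) => r r' H.
rewrite !ltNge H ?mem_head // (Hb r r') // => c cb.
by apply: H; rewrite in_cons cb orbT.
Qed.

Lemma step_finite_range (T : Type) (f : J R -> T) : is_step f ->
  exists n (s : nat -> J R), forall r, exists2 k, (k < n)%N & f r = f (s k).
Proof.
case=> n [a [a0 an ainc astep]].
have : forall k, exists r0 : J R, forall r : J R,
    a k <= sval r < a k.+1 -> a k <= sval r0 < a k.+1.
  move=> k; case: (pselect (exists r : J R, a k <= sval r < a k.+1)) => [[r hr]|nr].
    by exists r.
  by exists (J0 R) => r hr; case: nr; exists r.
case/choice => s Hs.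
exists n, s => r; have [k [kn hk]] := partition_locate a0 an (svalP r).
by exists k => //; apply: (astep k kn) => //; exact: Hs hk.
Qed.

Lemma nbhs_bigcap_step (X : topologicalType) (T : Type) (x : X)
    (f : J R -> T) (N : T -> set X) :
  is_step f -> (forall y, nbhs x (N y)) -> nbhs x [set z | forall r, N (f r) z].
Proof.
move=> /step_finite_range [n [s fs]] Nx.
have : nbhs x [set z | forall k, (k < n)%N -> N (f (s k)) z].
  elim: n {fs} => [|n IH]; first by apply: filterS filterT => z _ k.
  apply: filterS (filterI IH (Nx (f (s n)))) => z [Nz Nnz] k.
  by rewrite ltnS leq_eqVlt => /orP[/eqP -> //|]; exact: Nz.
by apply: filterS => z Nz r; have [k kn ->] := fs r; exact: Nz.
Qed.

Lemma step_level_not_small (T : Type) (f : J R -> T) (r1 : J R) : is_step f ->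
  exists2 d : R, 0 < d & forall P : J R -> Prop, (muJ P < d%:E)%E ->
    exists r, f r = f r1 /\ ~ P r.
Proof.
case=> n [a [a0 an ainc astep]].
have [k [kn /andP[ak1 ak2]]] := partition_locate a0 an (svalP r1).
have /andP[r1_ge0 r1_lt1] := svalP r1.
exists (Num.min (a k.+1) 1 - sval r1); first by rewrite subr_gt0 lt_min ak2 r1_lt1.
move=> P Psmall; apply: contrapT => nr.
suff : ((Num.min (a k.+1) 1 - sval r1)%:E <= muJ P)%E by rewrite leNgt Psmall.
apply: muJ_ge_itv => //; first by rewrite le_min (ltW ak2) (ltW r1_lt1).
  by rewrite ge_min lexx orbT.
move=> r /andP[r1r rmin]; apply: contrapT => nPr; apply: nr; exists r; split => //.
apply: (astep k kn); last by rewrite ak1 ak2.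
by rewrite (le_trans ak1 r1r) (lt_le_trans rmin) // ge_min lexx.
Qed.

End StepFunctions.

Lemma nbhs_open_sub (X : topologicalType) (x : X) (A : set X) : nbhs x A ->
  exists V, [/\ open V, V x & V `<=` A].
Proof. by rewrite nbhsE => -[V [oV Vx] VA]; exists V. Qed.

Lemma nbhs_preimage (X Y : topologicalType) (f : X -> Y) (x : X) (W : set Y) :
  continuous f -> open W -> W (f x) -> nbhs x (f @^-1` W).
Proof. by move=> fc oW Wfx; apply: (fc x); exact: open_nbhs_nbhs. Qed.

Lemma nbhs_setX (X Y : topologicalType) (x : X) (y : Y) (A : set X) (B : set Y) :
  nbhs x A -> nbhs y B -> nbhs (x, y) (A `*` B).
Proof. by move=> Ax By; exists (A, B). Qed.

Lemma nbhs_square (X Y : topologicalType) (F : X * X -> Y) (x : X) (W : set Y) :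
  continuous F -> open W -> W (F (x, x)) ->
  exists2 A, nbhs x A & forall u v, A u -> A v -> W (F (u, v)).
Proof.
move=> Fc oW /(nbhs_preimage Fc oW) [[A1 A2] /= [A1x A2x] A12].
exists (A1 `&` A2); first exact: filterI.
by move=> u v [A1u _] [_ A2v]; exact: (A12 (u, v)).
Qed.

Section GBulletTopology.
Variables (R : realType) (G : topologicalType) (op : G -> G -> G) (e : G) (inv : G -> G).
Hypothesis gyroG : is_gyrogroup op e inv.
Hypothesis op_cont : continuous (fun p : G * G => op p.1 p.2).
Hypothesis inv_cont : continuous inv.
Hypothesis T1_G : accessible_space G.
Local Notation Gb := (gbullet R op e).

Lemma continuous_op (X : topologicalType) (f g : X -> G) :
  continuous f -> continuous g -> continuous (fun x => op (f x) (g x)).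
Proof.
by move=> fc gc x; apply: (continuous2_cvg _ (@op_cont (f x, g x))); [exact: fc | exact: gc].
Qed.

Lemma nbhs_opl (a x : G) (W : set G) : open W -> W (op a x) -> nbhs x (op a @^-1` W).
Proof.
apply: nbhs_preimage; apply: continuous_op; first exact: cst_continuous.
by move=> y; exact: cvg_id.
Qed.

Lemma gbullet_ext (f g : Gb) : sval f = sval g -> f = g.
Proof. by case: f g => [f ?] [g ?] /= fg; exact: eq_exist. Qed.

Definition cst_gb (x : G) : Gb :=
  exist _ (fun=> x) ((is_stepP _).2 (cut_step_cst R x)).

(* By left cancellation g = f (+) gb_diff f g, so gb_diff f g witnesses that g
   lies in a basic set at f. *)
Definition gb_diff (f g : Gb) : Gb :=
  exist _ (fun r => op (inv (sval f r)) (sval g r))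
    ((is_stepP _).2 (cut_step_map2 (fun a b => op (inv a) b)
       ((is_stepP _).1 (svalP f)) ((is_stepP _).1 (svalP g)))).

Lemma gb_basic_diff (f h : Gb) (V : set G) (eps : R) :
  gb_O V eps (gb_diff f h) -> gb_basic f V eps h.
Proof.
by exists (gb_diff f h) => //; apply: funext => r; rewrite /gb_op_fun /= (gyro_addNKr gyroG).
Qed.

Lemma gb_basic_refl (f : Gb) (V : set G) (eps : R) :
  V e -> 0 < eps -> gb_basic f V eps f.
Proof.
move=> Ve eps0; apply: gb_basic_diff.
by rewrite /gb_O /= -/(muJ _) muJ_eq0 ?lte_fin //= => r; rewrite (gyro_addNr gyroG).
Qed.

(* If k is in h (+) O(V', eps/2) and l in k (+) O(V', eps/2), then
   (-)h(r) (+) l(r) = (-)a (+) ((a (+) u) (+) v) with a = h(r) and u, v in V'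
   outside a set of measure < eps; V' is chosen, uniformly over the finitely
   many values a of h, so that this expression then lies in V. *)
Lemma gb_basic_shrink (h : Gb) (V : set G) (eps : R) : open V -> V e -> 0 < eps ->
  exists V', [/\ open V', V' e &
    forall k, gb_basic h V' (eps / 2) k -> gb_basic k V' (eps / 2) `<=` gb_basic h V eps].
Proof.
move=> oV Ve eps0.
pose F a (p : G * G) := op (inv a) (op (op a p.1) p.2).
have Fc a : continuous (F a).
  apply: continuous_op; first exact: cst_continuous.
  apply: continuous_op; last by move=> p; exact: cvg_snd.
  by apply: continuous_op; [exact: cst_continuous | move=> p; exact: cvg_fst].
have : forall a, exists A, nbhs e A /\ forall u v, A u -> A v -> V (F a (u, v)).
  move=> a; have Fe : V (F a (e, e)).
    by rewrite /F /= !(gyro_addr0 gyroG) (gyro_addNr gyroG).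
  by have [A Ae AV] := nbhs_square (Fc a) oV Fe; exists A.
case/choice => N NP.
have [V' [oV' V'e V'N]] :=
  nbhs_open_sub (nbhs_bigcap_step (svalP h) (fun a => (NP a).1)).
exists V'; split => // k [g Og kg] l [g' Og' lg'].
apply: gb_basic_diff; rewrite /gb_O /= -/(muJ _).
apply: le_lt_trans (muJ_leU (Q1 := fun r => ~ V' (sval g r))
                            (Q2 := fun r => ~ V' (sval g' r)) _) _.
  move=> r /= nV; apply/not_andP => -[V'g V'g']; apply: nV.
  rewrite lg' /gb_op_fun kg /gb_op_fun.
  exact: (NP _).2 (V'N _ V'g r) (V'N _ V'g' r).
by rewrite [eps]splitr EFinD; apply: lteD.
Qed.

Lemma nbhs_gb_basic (f : Gb) (V : set G) (eps : R) : open V -> V e -> 0 < eps ->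
  nbhs f (gb_basic f V eps).
Proof.
move=> oV Ve eps0; rewrite nbhsE.
exists [set h | exists V1 eps1, [/\ open V1, V1 e, 0 < eps1 &
                   gb_basic h V1 eps1 `<=` gb_basic f V eps]]; last first.
  by move=> h [V1 [eps1 [_ V1e eps1_gt0 sub]]]; apply: sub; exact: gb_basic_refl.
split; last by exists V, eps; split.
move=> h [V1 [eps1 [oV1 V1e eps1_gt0 sub]]].
have eps2_gt0 : 0 < eps1 / 2 by rewrite divr_gt0.
have [V' [oV' V'e shrink]] := gb_basic_shrink h oV1 V1e eps1_gt0.
exists V', (eps1 / 2); split => // k hk; exists V', (eps1 / 2); split => //.
exact: subset_trans (shrink k hk) sub.
Qed.

Lemma gb_continuous (X : topologicalType) (phi : X -> Gb) :
  (forall x V eps, open V -> V e -> 0 < eps ->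
     \forall y \near x, gb_O V eps (gb_diff (phi x) (phi y))) ->
  continuous phi.
Proof.
move=> near_phi x U /nbhs_open_sub [W [oW Wx WU]].
have [V [eps [oV Ve eps0 sub]]] := oW _ Wx.
apply: filterS (near_phi x V eps oV Ve eps0) => y Oy.
by apply/WU/sub/gb_basic_diff.
Qed.

(* A point ((x0, t1, x1), ..., tn, xn) codes the function equal to x0, then
   overwritten by x_i from t_i on, for i = 1, ..., n in turn. *)
Fixpoint step_code (n : nat) : topologicalType :=
  if n is n'.+1 then ((step_code n' * R) * G)%type else G.

Fixpoint decode n : step_code n -> J R -> G :=
  match n return step_code n -> J R -> G with
  | 0 => fun x _ => x
  | n'.+1 => fun p r => if sval r < p.1.2 then decode p.1.1 r else p.2
  end.

Lemma decode_cut_step n (p : step_code n) : cut_step (decode p).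
Proof.
elim: n p => [|n IH] p /=; first exact: cut_step_cst.
exact: cut_step_overwrite.
Qed.

Definition decode_gb n (p : step_code n) : Gb :=
  exist _ (decode p) ((is_stepP _).2 (decode_cut_step p)).

Lemma decode_near n (p : step_code n) (V : set G) (eps : R) :
  open V -> V e -> 0 < eps ->
  \forall q \near p, (muJ (fun r => ~ V (op (inv (decode p r)) (decode q r))) < eps%:E)%E.
Proof.
elim: n p V eps => [|n IH] p V eps oV Ve eps0 /=;
  have near_cancel x : nbhs x (op (inv x) @^-1` V)
    by apply: nbhs_opl oV _; rewrite /= (gyro_addNr gyroG).
  apply: filterS (near_cancel p) => q Vq.
  by rewrite muJ_eq0 ?lte_fin // => r; exact.
case: p => [[p0 t] x] /=.
have eps2_gt0 : 0 < eps / 2 by rewrite divr_gt0.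
have near_t := nbhsx_ballx t (eps / 2) eps2_gt0.
have := nbhs_setX (nbhs_setX (IH p0 V _ oV Ve eps2_gt0) near_t) (near_cancel x).
apply: filterS => -[[q0 t'] x'] /= [[IHq tt'] Vx'].
set farV := fun r => ~ V (op (inv (decode p0 r)) (decode q0 r)).
set moved := fun r : J R => (sval r < t) != (sval r < t').
apply: (@le_lt_trans _ _ (muJ farV + muJ moved)%E).
  apply: muJ_leU => r; rewrite /farV /moved.
  case: (ltP (sval r) t) => rt; case: (ltP (sval r) t') => rt' /=;
    by [left | right | right | move=> /(_ Vx')].
apply: (@le_lt_trans _ _ (muJ farV + `|t - t'|%:E)%E).
  by apply: leeD2l; exact: muJ_le_dist.
rewrite [eps]splitr EFinD; apply: lte_leD => //.
by rewrite lee_fin; move: tt'; rewrite /ball /= => /ltW.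
Qed.

Lemma decode_gb_continuous n : continuous (@decode_gb n).
Proof. by apply: gb_continuous => p V eps oV Ve eps0; exact: decode_near. Qed.

Fixpoint code_box (K : nat -> set G) (i0 : nat) (s : seq nat) : set (step_code (size s)) :=
  match s return set (step_code (size s)) with
  | [::] => K i0
  | i :: s' => (@code_box K i0 s' `*` `[0, 1]%classic) `*` K i
  end.
Arguments code_box : clear implicits.

Lemma code_box_compact (K : nat -> set G) i0 s :
  (forall n, compact (K n)) -> compact (code_box K i0 s).
Proof.
move=> Kc; elim: s => [|i s IH] /=; first exact: Kc.
exact: compact_setX (compact_setX IH (@segment_compact R 0 1)) (Kc i).
Qed.

Lemma decode_box_cover (K : nat -> set G) : \bigcup_n K n = setT -> forall f : Gb,
  exists i0 s (p : step_code (size s)), code_box K i0 s p /\ decode p = sval f.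
Proof.
move=> Kcov f.
have Kx x : exists i, K i x.
  by have : setT x by []; rewrite -Kcov => -[i _ Ki]; exists i.
case: (svalP f) => n [a [a0 an ainc astep]].
have a_le i j : (i <= j)%N -> (j <= n)%N -> a i <= a j.
  elim: j => [|j IH]; first by rewrite leqn0 => /eqP ->.
  rewrite leq_eqVlt => /orP[/eqP -> //|]; rewrite ltnS => ij jn.
  exact: le_trans (IH ij (ltnW jn)) (ltW (ainc j jn)).
have n_gt0 : (0 < n)%N.
  by rewrite lt0n; apply/eqP => n0; move: an; rewrite n0 a0 => /eqP; rewrite eq_sym oner_eq0.
suff build m : (m < n)%N -> exists i0 s (p : step_code (size s)),
    code_box K i0 s p /\ forall r, sval r < a m.+1 -> decode p r = sval f r.
  have [|i0 [s [p [box_p decode_p]]]] := build n.-1; first by rewrite prednK.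
  exists i0, s, p; split => //; apply: funext => r; apply: decode_p.
  by rewrite prednK // an (proj2 (andP (svalP r))).
elim: m => [|m IH] mn.
  have [i Ki] := Kx (sval f (J0 R)).
  exists i, [::], (sval f (J0 R)); split => // r ra1 /=.
  apply: (astep 0%N mn); rewrite a0 ?(proj1 (andP (svalP r))) ?ra1 //=.
  by rewrite lexx -a0 ainc.
have [i0 [s [p [box_p decode_p]]]] := IH (ltnW mn).
have am01 : 0 <= a m.+1 < 1.
  rewrite -a0 a_le ?(ltnW mn) //= -an.
  exact: lt_le_trans (ainc _ mn) (a_le _ _ mn (leqnn _)).
pose rm : J R := exist _ (a m.+1) am01.
have [i Ki] := Kx (sval f rm).
exists i0, (i :: s), ((p, a m.+1), sval f rm); split.
  split => //; split => //=; rewrite in_itv /= (proj1 (andP am01)).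
  exact: ltW (proj2 (andP am01)).
move=> r ram /=; case: ifP => [rm1|/negbT]; first exact: decode_p.
rewrite -leNgt => amr; apply: (astep m.+1 mn) => /=; last by rewrite amr ram.
by rewrite lexx ainc.
Qed.

Lemma sigma_compact_gbullet : sigma_compact G -> sigma_compact Gb.
Proof.
case=> K [Kc Kcov].
exists (fun k => if unpickle k is Some (i0, s) then @decode_gb (size s) @` code_box K i0 s
                 else set0); split.
  move=> k; case: unpickle => [[i0 s]|]; last exact: compact0.
  apply: continuous_compact; last exact: code_box_compact.
  exact/continuous_subspaceT/decode_gb_continuous.
apply/seteqP; split => // f _.
have [i0 [s [p [box_p decode_p]]]] := decode_box_cover Kcov f.
exists (pickle (i0, s)) => //; rewrite pickleK.
by exists p => //; apply: gbullet_ext.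
Qed.

Lemma gb_basic_no_cst (f : Gb) (r1 r2 : J R) : sval f r1 <> sval f r2 ->
  exists V (eps : R), [/\ open V, V e, 0 < eps & forall x, ~ gb_basic f V eps (cst_gb x)].
Proof.
move=> ab; set a := sval f r1 in ab *; set b := sval f r2 in ab *.
pose D (p : G * G) := op (inv (op b p.2)) (op a p.1).
have Dc : continuous D.
  apply: continuous_op; last first.
    by apply: continuous_op; [exact: cst_continuous | move=> p; exact: cvg_fst].
  move=> p; apply: (continuous_comp (f := fun q : G * G => op b q.2)); last exact: inv_cont.
  by apply: continuous_op; [exact: cst_continuous | move=> q; exact: cvg_snd].
have De : D (e, e) != e.
  by apply/eqP; rewrite /D /= !(gyro_addr0 gyroG); exact: (gyro_subr_neq0 gyroG).
have [W [oW WDe We]] := T1_G De.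
have WDe' : W (D (e, e)) by rewrite -inE.
have [A Ae AW] := nbhs_square Dc oW WDe'.
have [V [oV Ve VA]] := nbhs_open_sub Ae.
have [d1 d1_gt0 level1] := step_level_not_small r1 (svalP f).
have [d2 d2_gt0 level2] := step_level_not_small r2 (svalP f).
exists V, (Num.min d1 d2); split => //; first by rewrite lt_min d1_gt0 d2_gt0.
move=> x [g Og fg].
have [s1 [fs1 /contrapT Vs1]] : exists r, sval f r = a /\ ~ ~ V (sval g r).
  by apply: level1; apply: lt_le_trans Og _; rewrite lee_fin ge_min lexx.
have [s2 [fs2 /contrapT Vs2]] : exists r, sval f r = b /\ ~ ~ V (sval g r).
  by apply: level2; apply: lt_le_trans Og _; rewrite lee_fin ge_min lexx orbT.
have xa : x = op a (sval g s1) by rewrite -fs1; exact: (congr1 (fun h => h s1) fg).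
have xb : x = op b (sval g s2) by rewrite -fs2; exact: (congr1 (fun h => h s2) fg).
have := AW _ _ (VA _ Vs1) (VA _ Vs2).
by rewrite /D /= -xa -xb (gyro_addNr gyroG); move: We; rewrite inE.
Qed.

Lemma cluster_cst_gb_cst (F : set_system G) (f : Gb) : Filter F ->
  cluster (cst_gb @ F) f -> exists x, f = cst_gb x.
Proof.
move=> FF clf.
have F_range : F (cst_gb @^-1` range cst_gb) by apply: filterS filterT => x _; exists x.
have f_cst r : sval f r = sval f (J0 R).
  apply: contrapT => /gb_basic_no_cst [V [eps [oV Ve eps_gt0 no_cst]]].
  have [_ [[x _ <-]]] := clf _ _ F_range (nbhs_gb_basic f oV Ve eps_gt0).
  exact: no_cst.
by exists (sval f (J0 R)); apply: gbullet_ext; apply: funext.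
Qed.

Lemma cluster_cst_gb (F : set_system G) (x : G) : Filter F ->
  cluster (cst_gb @ F) (cst_gb x) -> cluster F x.
Proof.
move=> FF clf A B FA /nbhs_open_sub [W [oW Wx WB]].
have : nbhs e (op x @^-1` W).
  by apply: nbhs_opl oW _; rewrite /= (gyro_addr0 gyroG).
move=> /nbhs_open_sub [V [oV Ve VW]].
have FA' : F (cst_gb @^-1` (cst_gb @` A)) by apply: filterS FA => y Ay; exists y.
have [_ [[y Ay <-] [g Og yg]]] := clf _ _ FA' (nbhs_gb_basic _ oV Ve ltr01).
have [r /contrapT Vgr] := muJ_lt1 Og.
exists y; split => //; apply: WB.
by have /= -> := congr1 (fun h => h r) yg; exact: VW.
Qed.

Lemma compact_cst_gb_preimage (K : set Gb) : compact K -> compact (cst_gb @^-1` K).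
Proof.
move=> Kc F PF FK; have [f [Kf clf]] := Kc (cst_gb @ F) _ FK.
have [x fx] := cluster_cst_gb_cst _ clf; rewrite fx in Kf clf.
by exists x; split => //; exact: cluster_cst_gb.
Qed.

Lemma sigma_compact_of_gbullet : sigma_compact Gb -> sigma_compact G.
Proof.
case=> K [Kc Kcov]; exists (fun n => cst_gb @^-1` K n); split.
  by move=> n; exact: compact_cst_gb_preimage.
apply/seteqP; split => // x _.
by have : setT (cst_gb x) by []; rewrite -Kcov => -[n _ Kn]; exists n.
Qed.

End GBulletTopology.

Theorem mainTheorem11 (R : realType) (G : topologicalType)
    (op : G -> G -> G) (e : G) (inv : G -> G) :
  is_topological_gyrogroup op e inv ->
  (sigma_compact (gbullet R op e) <-> sigma_compact G).
Proof.
case=> gyroG op_cont inv_cont T1_G; split.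
  exact: sigma_compact_of_gbullet gyroG op_cont inv_cont T1_G.
exact: sigma_compact_gbullet gyroG op_cont.
Qed.
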